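(* Let $n\ge2$. Inside $\mathbb P(R_3)$, identified with the Plücker space of $\mathbb G(n-1,n+2)$ as in the context, the intersection $\mathrm{Split}_3(\mathbb P^n)\cap\mathbb G(n-1,n+2)$ contains the set $$\{\langle Z+2y_1+2y_2\rangle\cap\langle Z+2y_1+2y_3\rangle\cap\langle Z+2y_2+2y_3\rangle\ :\ Z\subset\Sigma\text{ a subscheme of length }n-2,\ y_1,y_2,y_3\in\Sigma\text{ pairwise distinct}\}.$$
   Context: $K$ is an algebraically closed field of characteristic $0$, $R=K[x_0,\dots,x_n]$, $R_3$ its degree-$3$ part, $\mathbb P(R_3)$ the projective space of cubic forms up to scalars; $\mathrm{Split}_3(\mathbb P^n)$ is the set of classes $[L_1L_2L_3]$ with $L_i\in R_1$. Let $z_0,\dots,z_{n+2}$ be coordinates on $\mathbb P^{n+2}$ and $\Sigma=\{[t_0^{n+2}:t_0^{n+1}t_1:\dots:t_1^{n+2}]\}$ the standard rational normal curve. $\mathbb G(n-1,n+2)$ is the Grassmannian of $(n-1)$-spaces of $\mathbb P^{n+2}$ with (dual) Plücker coordinates: if $\Lambda$ is cut out by independent equations $\sum_j u_{i,j}z_j=0$, $i=1,2,3$, its coordinates are the $3\times3$ minors $p_{i_1i_2i_3}=\det(u_{a,i_b})$. For $0\ne L=u_0x_0+\dots+u_nx_n$ let $\phi(L)$ be the $(n-1)$-space $u_0z_j+\dots+u_nz_{j+n}=0$, $j=0,1,2$; its Plücker coordinates form a basis of $K[u_0,\dots,u_n]_3$, giving a unique linear isomorphism $\mathbb P(R_3)\to\mathbb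 P^{\binom{n+3}{3}-1}$ with $[L^3]\mapsto$ Plücker point of $\phi(L)$; through it $\mathbb G(n-1,n+2)\subset\mathbb P(R_3)$. For a subscheme $W\subset\Sigma$, $\langle W\rangle$ is its linear span; $Z+2y_1+2y_2$ is the sum of divisors on $\Sigma\cong\mathbb P^1$. *)

From HB Require Import structures.
From mathcomp Require Import all_boot all_order all_algebra.
From mathcomp Require Import mpoly.
Set Implicit Arguments. Unset Strict Implicit. Unset Printing Implicit Defensive.
Import Order.TTheory GRing.Theory Num.Theory.
Local Open Scope ring_scope.

Section Defs.
Variable K : fieldType.

(* the two variables t0, t1 of binary forms on Sigma = P^1 *)
Definition t0 : 'I_2 := ord0.
Definition t1 : 'I_2 := ord_max.

Definition bdvd (f g : {mpoly K[2]}) : Prop := exists q : {mpoly K[2]}, g = q * f.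

(* pullback to P^1 of the hyperplane sum_j u_j z_j = 0 of P^{n+2}
   along t |-> [t0^{n+2} : t0^{n+1} t1 : ... : t1^{n+2}] *)
Definition pullback (n : nat) (u : 'rV[K]_(n.+3)) : {mpoly K[2]} :=
  \sum_(j < n.+3) u 0 j *: ('X_t0 ^+ (n.+2 - j) * 'X_t1 ^+ j).

(* linear span <W> of the subscheme W of Sigma defined by the binary form f:
   the intersection of all hyperplanes containing W (scheme-theoretically),
   as a set of vectors z in K^{n+3} *)
Definition in_span (n : nat) (f : {mpoly K[2]}) (z : 'cV[K]_(n.+3)) : Prop :=
  forall u : 'rV[K]_(n.+3), bdvd f (pullback u) -> u *m z = 0.

(* binary linear form vanishing at the point y = [y.1 : y.2] of P^1 *)
Definition ptform (y : K * K) : {mpoly K[2]} := y.2 *: 'X_t0 - y.1 *: 'X_t1.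

Definition pdistinct (y y' : K * K) : Prop := y.1 * y'.2 != y.2 * y'.1.

Definition linL (n : nat) (u : 'rV[K]_(n.+1)) : {mpoly K[n.+1]} :=
  \sum_(i < n.+1) u 0 i *: 'X_i.

(* equations of phi(L): u_0 z_j + ... + u_n z_{j+n} = 0, j = 0,1,2 *)
Definition phiMat (n : nat) (u : 'rV[K]_(n.+1)) : 'M[K]_(3, n.+3) :=
  \matrix_(j < 3, k < n.+3)
    (if (j <= k)%N && (k - j < n.+1)%N then u 0 (inord (k - j)) else 0).

(* Plücker coordinates, indexed by all triples (i1,i2,i3) (alternating) *)
Definition PlSpace (m : nat) := {ffun 'I_m * 'I_m * 'I_m -> K^o}.

Definition tsel (m : nat) (t : 'I_m * 'I_m * 'I_m) (b : 'I_3) : 'I_m :=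
  match val b with 0 => t.1.1 | 1 => t.1.2 | _ => t.2 end.

Definition minors (m : nat) (U : 'M[K]_(3, m)) : PlSpace m :=
  [ffun t => \det (colsub (tsel t) U)].

End Defs.

From HB Require Import structures.
From mathcomp Require Import all_boot all_order all_algebra.
From mathcomp Require Import mpoly.
From mathcomp Require Import ring zify.
Import GRing.Theory.
Local Open Scope ring_scope.

(* Let l_i = ptform y_i.  The subscheme Z + 2y_i + 2y_j is cut out by
   W_ij = Z l_i^2 l_j^2, a form of the same degree n+2 as the pullbacks of
   hyperplanes, so its span is the hyperplane whose equation is the coefficient
   vector of W_ij; the three W_ij are independent, so the spans meet in an
   (n-1)-space U.  For a form g of degree n, phi(L_g) is cut out by the coefficient
   vectors of g t0^2, g t0 t1, g t1^2.  Take g_1 = c Z l_2 l_3, g_2 = Z l_1 l_3,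
   g_3 = Z l_1 l_2 with c = prod_(i<j) det(y_i, y_j).  Polarizing L |-> L^3, the
   image of 6 L_1 L_2 L_3 is the sum of the mixed wedges of the equations of the
   phi(L_i).  Factoring out multiplication by Z (Cauchy-Binet) turns the claim that
   this sum is the wedge of the equations of U into an identity in the exterior cube
   of the space of quartics, checked coordinate by coordinate. *)

Section BinaryForms.
Context {K : fieldType}.
Local Notation P2 := {mpoly K[2]}.
Implicit Types (d e i j k : nat) (W : P2).

Definition bmono d i : 'X_{1..2} :=
  [multinom (if j == t0 then (d - i)%N else i) | j < 2].

Lemma bmono_t0 d i : bmono d i t0 = (d - i)%N.
Proof. by rewrite mnmE eqxx. Qed.

Lemma bmono_t1 d i : bmono d i t1 = i.
Proof. by rewrite mnmE. Qed.

Lemma ord2_cases (j : 'I_2) : j = t0 \/ j = t1.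
Proof. by case: j => [[|[|//]]] h; [left|right]; apply/val_inj. Qed.

Lemma mnm2_eq (m m' : 'X_{1..2}) : m t0 = m' t0 -> m t1 = m' t1 -> m = m'.
Proof. by move=> h0 h1; apply/mnmP => j; case: (ord2_cases j) => ->. Qed.

Lemma mdeg2E (m : 'X_{1..2}) : mdeg m = (m t0 + m t1)%N.
Proof.
by rewrite mdegE !big_ord_recl big_ord0 addn0; congr (_ + m _)%N; apply/val_inj.
Qed.

Lemma eq_bmono d i j : (bmono d i == bmono d j) = (i == j).
Proof.
apply/eqP/eqP => [h|-> //].
by have := congr1 (fun m : 'X_{1..2} => m t1) h; rewrite !bmono_t1.
Qed.

Lemma mdeg_bmono d i : (i <= d)%N -> mdeg (bmono d i) = d.
Proof. by move=> h; rewrite mdeg2E bmono_t0 bmono_t1 subnK. Qed.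

Lemma mdeg_eq_bmono d (m : 'X_{1..2}) :
  mdeg m = d -> m = bmono d (m t1) /\ (m t1 <= d)%N.
Proof.
rewrite mdeg2E => h; split; last by rewrite -h leq_addl.
by apply: mnm2_eq; rewrite ?bmono_t0 ?bmono_t1 // -h addnK.
Qed.

Lemma bmonoD d e i j : (i <= d)%N -> (j <= e)%N ->
  (bmono d i + bmono e j)%MM = bmono (d + e) (i + j).
Proof. by move=> hi hj; apply: mnm2_eq; rewrite mnmDE ?bmono_t0 ?bmono_t1 //; lia. Qed.

Lemma mpolyX_bmono d i : 'X_[bmono d i] = 'X_t0 ^+ (d - i) * 'X_t1 ^+ i :> P2.
Proof.
rewrite !mpolyXn -mpolyXD; congr mpolyX.
by apply: mnm2_eq; rewrite mnmDE !mulmnE !mnm1E ?bmono_t0 ?bmono_t1 /=; lia.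
Qed.

Lemma mcoeff_sum_bmono d n (c : nat -> K) (f : nat -> nat) k :
  (\sum_(i < n) c i *: 'X_[bmono d (f i)])@_(bmono d k) =
  \sum_(i < n) c i * (f i == k)%:R.
Proof. by rewrite raddf_sum /=; apply: eq_bigr => i _; rewrite mcoeffZ mcoeffX eq_bmono. Qed.

Lemma sum_ord_delta n (c : nat -> K) k (hk : (k < n)%N) :
  \sum_(i < n) c i * (i == k :> nat)%:R = c k.
Proof.
rewrite (bigD1 (Ordinal hk)) //= eqxx mulr1 big1 ?addr0 // => i ne.
by rewrite -(inj_eq val_inj) /= in ne; rewrite (negbTE ne) mulr0.
Qed.

Lemma dhomog_bmono_expand d W : W \is d.-homog ->
  W = \sum_(i < d.+1) W@_(bmono d i) *: 'X_[bmono d i].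
Proof.
move=> hW; apply/mpolyP => m.
have [/mdeg_eq_bmono [em hm]|hm] := eqVneq (mdeg m) d.
  rewrite em (mcoeff_sum_bmono _ _ (fun i => W@_(bmono d i)) (fun i : nat => i)).
  by rewrite (sum_ord_delta _ (fun i => W@_(bmono d i))).
rewrite (dhomog_nemf_coeff hW hm) raddf_sum /= big1 // => i _.
rewrite mcoeffZ mcoeffX; case: eqP => [h|]; last by rewrite mulr0.
by rewrite -h mdeg_bmono ?eqxx // -ltnS in hm.
Qed.

Lemma mcoeff_mulX_bmono d e a k W : W \is d.-homog -> (a <= e)%N ->
  (W * 'X_[bmono e a])@_(bmono (d + e) k) =
  if ((a <= k) && (k - a <= d))%N then W@_(bmono d (k - a)) else 0.
Proof.
move=> hW ha; rewrite {1}(dhomog_bmono_expand _ _ hW) mulr_suml.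
have E (i : 'I_d.+1) : W@_(bmono d i) *: 'X_[bmono d i] * 'X_[bmono e a] =
    W@_(bmono d i) *: 'X_[bmono (d + e) (i + a)].
  by rewrite -scalerAl -mpolyXD bmonoD // -ltnS.
rewrite (eq_bigr _ (fun (i : 'I_d.+1) _ => E i)).
rewrite (mcoeff_sum_bmono _ _ (fun i => W@_(bmono d i)) (fun i => i + a)%N).
case: ifP => [/andP[hak hkd] | h].
  have hka : (k - a < d.+1)%N by rewrite ltnS.
  rewrite -(sum_ord_delta _ (fun i => W@_(bmono d i)) _ hka).
  by apply: eq_bigr => i _; congr (_ * _%:R); apply/eqP/eqP; lia.
rewrite big1 // => i _; case: eqP => [hi|]; last by rewrite mulr0.
by move: h; rewrite -hi leq_addl addnK -ltnS ltn_ord.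
Qed.

End BinaryForms.

Section HyperplaneSpans.
Context {K : fieldType}.
Local Notation P2 := {mpoly K[2]}.

Definition coefrow (d : nat) (W : P2) : 'rV[K]_(d.+1) := \row_(j < d.+1) W@_(bmono d j).

Lemma pullbackE n (u : 'rV[K]_(n.+3)) :
  pullback u = \sum_(j < n.+3) u 0 j *: 'X_[bmono n.+2 j].
Proof. by apply: eq_bigr => j _; rewrite mpolyX_bmono. Qed.

Lemma mcoeff_pullback n (u : 'rV[K]_(n.+3)) (k : 'I_n.+3) :
  (pullback u)@_(bmono n.+2 k) = u 0 k.
Proof.
rewrite pullbackE (eq_bigr (fun j : 'I_n.+3 => u 0 (inord j) *: 'X_[bmono n.+2 j])).
  by rewrite (mcoeff_sum_bmono _ _ (fun j => u 0 (inord j)) (fun j : nat => j))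
    (sum_ord_delta _ (fun j => u 0 (inord j))) ?inord_val.
by move=> j _; rewrite inord_val.
Qed.

Lemma pullback_homog n (u : 'rV[K]_(n.+3)) : pullback u \is (n.+2).-homog.
Proof.
rewrite pullbackE; apply: rpred_sum => j _; apply: rpredZ.
by rewrite dhomogX; apply/eqP/mdeg_bmono; rewrite -ltnS.
Qed.

Lemma pullback_coefrow n (W : P2) : W \is (n.+2).-homog -> pullback (coefrow n.+2 W) = W.
Proof.
move=> hW; rewrite pullbackE {2}(dhomog_bmono_expand _ _ hW).
by apply: eq_bigr => j _; rewrite mxE.
Qed.

Lemma msize_dhomog {d} {p : P2} : p != 0 -> p \is d.-homog -> msize p = d.+1.
Proof.
move=> nz hp; have := dhomog_uniq nz (dhomog_msize hp) hp.
have : msize p != 0%N by rewrite msize_poly_eq0.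
by case: (msize p) => [|s] //= _ ->.
Qed.

(* A hyperplane contains the degree-(n+2) subscheme W only if its pullback, which
   also has degree n+2, is a constant multiple of W. *)
Lemma in_span_coefrow n (W : P2) (z : 'cV[K]_(n.+3)) : W != 0 -> W \is (n.+2).-homog ->
  in_span W z <-> coefrow n.+2 W *m z = 0.
Proof.
move=> nzW hW; split => [|Hz u [q Hq]].
  by apply; exists 1; rewrite mul1r pullback_coefrow.
have [q0|nzq] := eqVneq q 0.
  have -> : u = 0.
    by apply/rowP => k; rewrite -mcoeff_pullback Hq q0 mul0r mcoeff0 mxE.
  by rewrite mul0mx.
have nzp : pullback u != 0 by rewrite Hq mulf_neq0.
have := msizeM nzq nzW.
rewrite -Hq (msize_dhomog nzp (pullback_homog _ u)) (msize_dhomog nzW hW) => hs.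
have hq1 : (msize q <= 1)%N by move: hs; case: (msize q) => [|[|s]] //=; lia.
have -> : u = q@_0 *: coefrow n.+2 W.
  apply/rowP => k; rewrite -mcoeff_pullback Hq {1}(msize1_polyC hq1).
  by rewrite mul_mpolyC mcoeffZ !mxE.
by rewrite -scalemxAl Hz scaler0.
Qed.

Lemma meval_ptform (x : 'I_2 -> K) (y : K * K) :
  (ptform y).@[x] = y.2 * x t0 - y.1 * x t1.
Proof. by rewrite /ptform mevalB !mevalZ !mevalXU. Qed.

Lemma ptform_homog (y : K * K) : ptform y \is 1.-homog.
Proof. by rewrite /ptform rpredB // rpredZ // dhomogX; apply/eqP/mdeg1. Qed.

Lemma pdistinct_sym {y y' : K * K} : pdistinct y y' -> pdistinct y' y.
Proof. by rewrite /pdistinct [y'.1 * _]mulrC [y'.2 * _]mulrC eq_sym. Qed.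

Definition evpt (y : K * K) : 'I_2 -> K := fun j => if j == t0 then y.1 else y.2.

Lemma ptform_evpt (y y' : K * K) : (ptform y).@[evpt y'] = y.2 * y'.1 - y.1 * y'.2.
Proof. by rewrite meval_ptform. Qed.

Lemma ptform_evpt_neq0 {y y' : K * K} : pdistinct y y' -> (ptform y).@[evpt y'] != 0.
Proof. by rewrite ptform_evpt /pdistinct subr_eq0 eq_sym mulrC [y.1 * _]mulrC. Qed.

Lemma ptform_neq0 {y y' : K * K} : pdistinct y y' -> ptform y != 0.
Proof. by move/ptform_evpt_neq0; apply: contraNneq => ->; rewrite meval0. Qed.

End HyperplaneSpans.

Section SquarePairs.
Context {K : fieldType}.
Local Notation P2 := {mpoly K[2]}.
Variables y1 y2 y3 : K * K.

Definition sqpair (i : nat) : P2 :=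
  match i with
  | 0 => ptform y1 ^+ 2 * ptform y2 ^+ 2
  | 1 => ptform y1 ^+ 2 * ptform y3 ^+ 2
  | _ => ptform y2 ^+ 2 * ptform y3 ^+ 2
  end.

Lemma sqpair_homog i : sqpair i \is 4.-homog.
Proof.
by case: i => [|[|i]]; apply: (dhomogM (dhomogMn 2 (ptform_homog _)) (dhomogMn 2 (ptform_homog _))).
Qed.

Lemma ptform_evpt_id (y : K * K) : (ptform y).@[evpt y] = 0.
Proof. by rewrite ptform_evpt mulrC subrr. Qed.

Hypotheses (h12 : pdistinct y1 y2) (h13 : pdistinct y1 y3) (h23 : pdistinct y2 y3).

Lemma sqpair_neq0 i : sqpair i != 0.
Proof.
have n1 := ptform_neq0 h12; have n2 := ptform_neq0 h23.
have n3 := ptform_neq0 (pdistinct_sym h23).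
by case: i => [|[|i]]; rewrite mulf_neq0 // expf_neq0.
Qed.

(* Evaluating at y3, y2, y1 isolates the coefficients of the three forms in turn. *)
Lemma sqpair_free (v : 'I_3 -> K) :
  \sum_(i < 3) v i *: sqpair i = 0 -> forall i, v i = 0.
Proof.
move=> H.
have ev (y : K * K) : \sum_(i < 3) v i * (sqpair i).@[evpt y] = 0.
  rewrite -[RHS](meval0 (evpt y)) -[in RHS]H raddf_sum /=.
  by apply: eq_bigr => i _; rewrite mevalZ.
have nz (a b : K * K) :
    pdistinct a b -> (ptform a).@[evpt b] != 0 /\ (ptform b).@[evpt a] != 0.
  by move=> hab; split; apply: ptform_evpt_neq0; last apply: pdistinct_sym.
have [n13 n31] := nz _ _ h13; have [n12 n21] := nz _ _ h12; have [n23 n32] := nz _ _ h23.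
have e3 := ev y3; have e2 := ev y2; have e1 := ev y1.
rewrite !big_ord_recl !big_ord0 /= /bump /= !expr2 !mevalM !ptform_evpt_id in e1 e2 e3.
rewrite !(mul0r, mulr0, add0r, addr0) in e1 e2 e3.
move/eqP: e1; rewrite !mulf_eq0 (negbTE n21) (negbTE n31) !orbF => /eqP e1.
move/eqP: e2; rewrite !mulf_eq0 (negbTE n12) (negbTE n32) !orbF => /eqP e2.
move/eqP: e3; rewrite !mulf_eq0 (negbTE n13) (negbTE n23) !orbF => /eqP e3.
by case=> [[|[|[|//]]] hi]; [rewrite -e3 | rewrite -e2 | rewrite -e1]; congr v; apply/val_inj.
Qed.
End SquarePairs.

Section NatIndexedMatrices.
Context {K : fieldType}.
Implicit Types f g h w : nat -> nat -> K.

(* Matrices are encoded as functions [nat -> nat -> K], so that identities between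
   concrete 3x5 matrices reduce to [ring] on numeral indices. *)
Definition det3 h : K :=
  h 0%N 0%N * (h 1%N 1%N * h 2%N 2%N - h 1%N 2%N * h 2%N 1%N)
  - h 0%N 1%N * (h 1%N 0%N * h 2%N 2%N - h 1%N 2%N * h 2%N 0%N)
  + h 0%N 2%N * (h 1%N 0%N * h 2%N 1%N - h 1%N 1%N * h 2%N 0%N).

Definition mul35 f g : nat -> nat -> K := fun i j => \sum_(k < 5) f i k * g k j.

Definition fadd f g : nat -> nat -> K := fun i j => f i j + g i j.

Definition fscale (a : K) f : nat -> nat -> K := fun i j => a * f i j.

Definition cols3 h (t : nat * nat * nat) : nat -> nat -> K :=
  fun i j => h i (match j with 0 => t.1.1 | 1 => t.1.2 | _ => t.2 end).

Definition rows3 h (t : nat * nat * nat) : nat -> nat -> K :=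
  fun i j => h (match i with 0 => t.1.1 | 1 => t.1.2 | _ => t.2 end) j.

Lemma mul35_fadd f1 f2 g i j : mul35 (fadd f1 f2) g i j = mul35 f1 g i j + mul35 f2 g i j.
Proof. by rewrite /mul35 -big_split; apply: eq_bigr => k _; rewrite mulrDl. Qed.

Lemma mul35_fscale a f g i j : mul35 (fscale a f) g i j = a * mul35 f g i j.
Proof. by rewrite /mul35 mulr_sumr; apply: eq_bigr => k _; rewrite mulrA. Qed.

Definition incr3 : seq (nat * nat * nat) :=
  [:: (0, 1, 2); (0, 1, 3); (0, 1, 4); (0, 2, 3); (0, 2, 4);
      (0, 3, 4); (1, 2, 3); (1, 2, 4); (1, 3, 4); (2, 3, 4)]%N.

Lemma cauchy_binet35 f g :
  det3 (mul35 f g) = \sum_(t <- incr3) det3 (cols3 f t) * det3 (rows3 g t).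
Proof.
rewrite /incr3 !big_cons big_nil /det3 /cols3 /rows3 /mul35 /=.
rewrite !big_ord_recl !big_ord0 /= /bump /= !addn0 !add1n; ring.
Qed.

Definition polar3 (D : (nat -> nat -> K) -> K) f1 f2 f3 : K :=
  D (fadd (fadd f1 f2) f3) - D (fadd f1 f2) - D (fadd f1 f3) - D (fadd f2 f3)
  + D f1 + D f2 + D f3.

Lemma polar3_mul35 f1 f2 f3 w g :
  (forall t, t \in incr3 -> polar3 (fun h => det3 (cols3 h t)) f1 f2 f3 = det3 (cols3 w t)) ->
  polar3 (fun h => det3 (mul35 h g)) f1 f2 f3 = det3 (mul35 w g).
Proof.
move=> H; rewrite cauchy_binet35.
under eq_big_seq => t ht do rewrite -(H t ht).
by rewrite /polar3 !cauchy_binet35 /incr3 !big_cons !big_nil; cbv beta; ring.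
Qed.

End NatIndexedMatrices.

Section QuarticWedge.
Context {K : fieldType}.
Implicit Types ya yb : K * K.

(* Coefficients in the bases [bmono d]: [qcoef ya yb] lists those of
   [ptform ya * ptform yb], row j of [quadmx ya yb] those of its product with
   [t0^(2-j) t1^j], and row i of [sqmx] those of [sqpair i] (see the next section). *)
Definition qcoef ya yb (k : nat) : K :=
  match k with
  | 0 => ya.2 * yb.2
  | 1 => - (ya.2 * yb.1 + ya.1 * yb.2)
  | 2 => ya.1 * yb.1
  | _ => 0
  end.

Definition quadmx ya yb : nat -> nat -> K :=
  fun j k => if (j <= k)%N then qcoef ya yb (k - j) else 0.

Definition qprod (a b : nat -> K) (k : nat) : K :=
  match k with
  | 0 => a 0%N * b 0%N
  | 1 => a 0%N * b 1%N + a 1%N * b 0%N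
  | 2 => a 0%N * b 2%N + a 1%N * b 1%N + a 2%N * b 0%N
  | 3 => a 1%N * b 2%N + a 2%N * b 1%N
  | 4 => a 2%N * b 2%N
  | _ => 0
  end.

Definition sqmx (y1 y2 y3 : K * K) : nat -> nat -> K :=
  fun i => match i with
  | 0 => qprod (qcoef y1 y1) (qcoef y2 y2)
  | 1 => qprod (qcoef y1 y1) (qcoef y3 y3)
  | _ => qprod (qcoef y2 y2) (qcoef y3 y3)
  end.

Definition detpt ya yb : K := ya.1 * yb.2 - ya.2 * yb.1.

Definition discr3 (y1 y2 y3 : K * K) : K := detpt y1 y2 * detpt y1 y3 * detpt y2 y3.

(* The polarized wedge of the planes [l_a l_b * quadrics], the first one weighted
   by [discr3], equals the wedge of the three quartics [l_i^2 l_j^2]. *)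
Lemma polar3_quadmx (y1 y2 y3 : K * K) t : t \in incr3 ->
  polar3 (fun h => det3 (cols3 h t))
    (fscale (discr3 y1 y2 y3) (quadmx y2 y3)) (quadmx y1 y3) (quadmx y1 y2) =
  det3 (cols3 (sqmx y1 y2 y3) t).
Proof.
rewrite /incr3 !inE; repeat (case/orP; [move/eqP -> |]); try move/eqP ->;
by rewrite /polar3 /det3 /cols3 /fadd /fscale /quadmx /sqmx /qprod /qcoef /discr3 /detpt /=; ring.
Qed.

End QuarticWedge.

Section QuarticCoefficients.
Context {K : fieldType}.
Local Notation P2 := {mpoly K[2]}.

Definition quartic (a : nat -> K) : P2 := \sum_(k < 5) a k *: 'X_[bmono 4 k].

Definition mulZmx (Z : P2) (N : nat) : nat -> nat -> K :=
  fun k c => (Z * 'X_[bmono 4 k])@_(bmono N c).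

Lemma quadmx_quartic (ya yb : K * K) j : (j < 3)%N ->
  ptform ya * ptform yb * 'X_[bmono 2 j] = quartic (quadmx ya yb j).
Proof.
rewrite /quartic !big_ord_recl !big_ord0 /= /bump /= !addn0 !add1n.
by case: j => [|[|[|//]]] _; rewrite /quadmx /qcoef /= !mpolyX_bmono /ptform -!mul_mpolyC; ring.
Qed.

Lemma sqpair_quartic (y1 y2 y3 : K * K) i : sqpair y1 y2 y3 i = quartic (sqmx y1 y2 y3 i).
Proof.
rewrite /quartic !big_ord_recl !big_ord0 /= /bump /= !addn0 !add1n.
by case: i => [|[|i]]; rewrite /sqmx /qprod /qcoef /= !mpolyX_bmono /ptform -!mul_mpolyC; ring.
Qed.

Lemma mcoeff_mul_quartic (Z : P2) N (f : nat -> nat -> K) i c :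
  (Z * quartic (f i))@_(bmono N c) = mul35 f (mulZmx Z N) i c.
Proof.
by rewrite /quartic mulr_sumr raddf_sum /=; apply: eq_bigr => k _; rewrite -scalerAr mcoeffZ.
Qed.

Lemma phiMat_coefrow n (Z : P2) (ya yb : K * K) : Z \is (n - 2)%N.-homog -> (2 <= n)%N ->
  forall (j : 'I_3) (c : 'I_n.+3),
  phiMat (coefrow n (Z * (ptform ya * ptform yb))) j c = mul35 (quadmx ya yb) (mulZmx Z n.+2) j c.
Proof.
move=> hZ hn j c.
have hg : Z * (ptform ya * ptform yb) \is n.-homog.
  have -> : n = ((n - 2) + (1 + 1))%N by lia.
  by apply: dhomogM => //; apply: dhomogM; apply: ptform_homog.
rewrite -mcoeff_mul_quartic -quadmx_quartic // [Z * (_ * _ * _)]mulrA.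
have hj : (j <= 2)%N by rewrite -ltnS.
have := mcoeff_mulX_bmono _ _ j c _ hg hj; rewrite addn2 => ->.
rewrite mxE ltnS.
by case: ifP => // /andP[_ h]; rewrite mxE inordK // ltnS.
Qed.

End QuarticCoefficients.

Section PluckerCoordinates.
Context {K : fieldType}.

Lemma det3_mx (h : nat -> nat -> K) : \det (\matrix_(i < 3, j < 3) h i j) = det3 h.
Proof.
rewrite (expand_det_row _ 0) !big_ord_recr big_ord0 /= /cofactor.
rewrite !(expand_det_row _ 0) !big_ord_recr big_ord0 /= /cofactor.
by rewrite !big_ord0 !det_mx11 !mxE /bump /det3 /=; ring.
Qed.

Lemma minors_mul35 {m} {M : 'M[K]_(3, m)} {f G : nat -> nat -> K} :
  (forall (j : 'I_3) (c : 'I_m), M j c = mul35 f G j c) ->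
  forall t, minors M t = det3 (mul35 f (fun k j => G k (tsel t (inord j)))).
Proof.
move=> HM t; rewrite ffunE.
have -> : colsub (tsel t) M = \matrix_(i < 3, j < 3) mul35 f (fun k j => G k (tsel t (inord j))) i j.
  by apply/matrixP => i j; rewrite !mxE HM /mul35; under [RHS]eq_bigr do rewrite inord_val.
exact: det3_mx.
Qed.

Lemma phiMatD n (u v : 'rV[K]_(n.+1)) j c :
  phiMat (u + v) j c = phiMat u j c + phiMat v j c.
Proof. by rewrite !mxE; case: ifP => _; rewrite ?addr0 // mxE. Qed.

Lemma phiMatZ n a (u : 'rV[K]_(n.+1)) j c : phiMat (a *: u) j c = a * phiMat u j c.
Proof. by rewrite !mxE; case: ifP => _; rewrite ?mulr0 // mxE. Qed.

Lemma linLD n (u v : 'rV[K]_(n.+1)) : linL (u + v) = linL u + linL v.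
Proof. by rewrite /linL -big_split; apply: eq_bigr => i _; rewrite mxE scalerDl. Qed.

Lemma psi_polarize {n} {psi : {linear {mpoly K[n.+1]} -> PlSpace K n.+3}} :
  (forall u : 'rV[K]_(n.+1), psi (linL u ^+ 3) = minors (phiMat u)) ->
  forall u1 u2 u3 : 'rV[K]_(n.+1),
  psi (linL u1 * linL u2 * linL u3) *+ 6 =
  minors (phiMat (u1 + u2 + u3)) - minors (phiMat (u1 + u2))
  - minors (phiMat (u1 + u3)) - minors (phiMat (u2 + u3))
  + minors (phiMat u1) + minors (phiMat u2) + minors (phiMat u3).
Proof.
move=> hpsi u1 u2 u3.
have polarization : linL u1 * linL u2 * linL u3 *+ 6 =
    (linL u1 + linL u2 + linL u3) ^+ 3 - (linL u1 + linL u2) ^+ 3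
    - (linL u1 + linL u3) ^+ 3 - (linL u2 + linL u3) ^+ 3
    + linL u1 ^+ 3 + linL u2 ^+ 3 + linL u3 ^+ 3 by ring.
by rewrite -!hpsi -raddfMn polarization -!linLD !raddfD !raddfN.
Qed.

Lemma minors_phiMat_polar {n} {u1 u2 u3 : 'rV[K]_(n.+1)} {U : 'M[K]_(3, n.+3)}
    {f1 f2 f3 w G : nat -> nat -> K} :
  (forall j c, phiMat u1 j c = mul35 f1 G j c) ->
  (forall j c, phiMat u2 j c = mul35 f2 G j c) ->
  (forall j c, phiMat u3 j c = mul35 f3 G j c) ->
  (forall j c, U j c = mul35 w G j c) ->
  (forall t, t \in incr3 -> polar3 (fun h => det3 (cols3 h t)) f1 f2 f3 = det3 (cols3 w t)) ->
  minors (phiMat (u1 + u2 + u3)) - minors (phiMat (u1 + u2))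
  - minors (phiMat (u1 + u3)) - minors (phiMat (u2 + u3))
  + minors (phiMat u1) + minors (phiMat u2) + minors (phiMat u3) = minors U.
Proof.
move=> h1 h2 h3 hU hw.
have h12 j c : phiMat (u1 + u2) j c = mul35 (fadd f1 f2) G j c by rewrite phiMatD h1 h2 mul35_fadd.
have h13 j c : phiMat (u1 + u3) j c = mul35 (fadd f1 f3) G j c by rewrite phiMatD h1 h3 mul35_fadd.
have h23 j c : phiMat (u2 + u3) j c = mul35 (fadd f2 f3) G j c by rewrite phiMatD h2 h3 mul35_fadd.
have h123 j c : phiMat (u1 + u2 + u3) j c = mul35 (fadd (fadd f1 f2) f3) G j c.
  by rewrite phiMatD h12 h3 [RHS]mul35_fadd.
apply/ffunP => t.
have addE (f g : PlSpace K n.+3) : (f + g) t = f t + g t by rewrite ffunE.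
have oppE (f : PlSpace K n.+3) : (- f) t = - f t by rewrite ffunE.
rewrite !addE !oppE (minors_mul35 h123) (minors_mul35 h12) (minors_mul35 h13)
  (minors_mul35 h23) (minors_mul35 h1) (minors_mul35 h2) (minors_mul35 h3) (minors_mul35 hU).
exact: polar3_mul35.
Qed.

End PluckerCoordinates.

Section SpanMatrix.
Context {K : fieldType}.
Local Notation P2 := {mpoly K[2]}.
Variables (n : nat) (Z : P2) (y1 y2 y3 : K * K).

Definition spanmx : 'M[K]_(3, n.+3) :=
  \matrix_(i < 3, c < n.+3) (Z * sqpair y1 y2 y3 i)@_(bmono n.+2 c).

Lemma spanmx_mul35 i c : spanmx i c = mul35 (sqmx y1 y2 y3) (mulZmx Z n.+2) i c.
Proof. by rewrite mxE sqpair_quartic mcoeff_mul_quartic. Qed.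

Lemma row_spanmx i : row i spanmx = coefrow n.+2 (Z * sqpair y1 y2 y3 i).
Proof. by apply/rowP => c; rewrite !mxE. Qed.

Lemma mulmx_spanmx (v : 'rV[K]_3) :
  v *m spanmx = coefrow n.+2 (Z * \sum_(i < 3) v 0 i *: sqpair y1 y2 y3 i).
Proof.
apply/rowP => c; rewrite !mxE mulr_sumr raddf_sum /=.
by apply: eq_bigr => i _; rewrite mxE -scalerAr mcoeffZ.
Qed.

Hypotheses (hn : (2 <= n)%N) (hZ : Z \is (n - 2)%N.-homog).

Lemma Zsqpair_homog i : Z * sqpair y1 y2 y3 i \is (n.+2).-homog.
Proof.
have -> : n.+2 = ((n - 2) + 4)%N by lia.
exact: dhomogM hZ (sqpair_homog _ _ _ i).
Qed.

Lemma psi_split_spanmx (psi : {linear {mpoly K[n.+1]} -> PlSpace K n.+3}) :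
  (forall u : 'rV[K]_(n.+1), psi (linL u ^+ 3) = minors (phiMat u)) ->
  psi (linL (discr3 y1 y2 y3 *: coefrow n (Z * (ptform y2 * ptform y3)))
       * linL (coefrow n (Z * (ptform y1 * ptform y3)))
       * linL (coefrow n (Z * (ptform y1 * ptform y2)))) *+ 6 = minors spanmx.
Proof.
move=> hpsi; rewrite (psi_polarize hpsi).
apply: (minors_phiMat_polar _ _ _ spanmx_mul35 (polar3_quadmx y1 y2 y3));
  try exact: phiMat_coefrow.
by move=> j c; rewrite phiMatZ phiMat_coefrow // mul35_fscale.
Qed.

Hypotheses (hZ0 : Z != 0)
  (h12 : pdistinct y1 y2) (h13 : pdistinct y1 y3) (h23 : pdistinct y2 y3).

Lemma rank_spanmx : \rank spanmx = 3.
Proof.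
apply/eqP/inj_row_free => v; rewrite mulmx_spanmx => hv.
have hS : Z * \sum_(i < 3) v 0 i *: sqpair y1 y2 y3 i = 0.
  have hom : Z * \sum_(i < 3) v 0 i *: sqpair y1 y2 y3 i \is (n.+2).-homog.
    rewrite mulr_sumr; apply: rpred_sum => i _; rewrite -scalerAr.
    exact/rpredZ/Zsqpair_homog.
  rewrite (dhomog_bmono_expand _ _ hom) big1 // => c _.
  by have := congr1 (fun r : 'rV[K]_(n.+3) => r 0 c) hv; rewrite !mxE => ->; rewrite scale0r.
move/eqP: hS; rewrite mulf_eq0 (negbTE hZ0) /= => /eqP.
by move/(sqpair_free _ _ _ h12 h13 h23) => v0; apply/rowP => i; rewrite v0 mxE.
Qed.

Lemma in_span_spanmx (z : 'cV[K]_(n.+3)) :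
  (in_span (Z * ptform y1 ^+ 2 * ptform y2 ^+ 2) z /\
   in_span (Z * ptform y1 ^+ 2 * ptform y3 ^+ 2) z /\
   in_span (Z * ptform y2 ^+ 2 * ptform y3 ^+ 2) z) <-> spanmx *m z = 0.
Proof.
have E k : (k < 3)%N -> in_span (Z * sqpair y1 y2 y3 k) z <-> row (inord k) spanmx *m z = 0.
  move=> hk; rewrite row_spanmx inordK //.
  by apply: in_span_coefrow; rewrite ?mulf_neq0 ?sqpair_neq0 ?Zsqpair_homog.
have E0 := E 0%N isT; have E1 := E 1%N isT; have E2 := E 2%N isT.
rewrite /= in E0 E1 E2; rewrite -!(mulrA Z) E0 E1 E2.
split => [[h0 [h1 h2]] | hz]; last by rewrite -!row_mul hz !row0.
apply/row_matrixP => i; rewrite row0 row_mul.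
have -> : i = inord i by rewrite inord_val.
by case: i => [[|[|[|//]]] ?].
Qed.

End SpanMatrix.

Theorem proposition2p10
  (K : closedFieldType) (hK : [pchar K] =i pred0) (n : nat) (hn : (2 <= n)%N)
  (psi : {linear {mpoly K[n.+1]} -> PlSpace K n.+3})
  (hpsi : forall u : 'rV[K]_(n.+1), psi (linL u ^+ 3) = minors (phiMat u))
  (Z : {mpoly K[2]}) (hZ0 : Z != 0) (hZ : Z \is (n - 2)%N.-homog)
  (y1 y2 y3 : K * K)
  (h12 : pdistinct y1 y2) (h13 : pdistinct y1 y3) (h23 : pdistinct y2 y3) :
  let W12 := Z * ptform y1 ^+ 2 * ptform y2 ^+ 2 in
  let W13 := Z * ptform y1 ^+ 2 * ptform y3 ^+ 2 in
  let W23 := Z * ptform y2 ^+ 2 * ptform y3 ^+ 2 in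
  exists U : 'M[K]_(3, n.+3),
    \rank U = 3%N /\
    (forall z : 'cV[K]_(n.+3),
        (in_span W12 z /\ in_span W13 z /\ in_span W23 z) <-> U *m z = 0) /\
    exists (u1 u2 u3 : 'rV[K]_(n.+1)) (c : K),
      c != 0 /\ psi (linL u1 * linL u2 * linL u3) = c *: minors U.
Proof.
move=> W12 W13 W23.
exists (spanmx n Z y1 y2 y3); split; first exact: rank_spanmx.
split; first exact: in_span_spanmx.
have h6 : (6%:R : K) != 0 by move/pcharf0P: hK => ->.
exists (discr3 y1 y2 y3 *: coefrow n (Z * (ptform y2 * ptform y3))),
  (coefrow n (Z * (ptform y1 * ptform y3))), (coefrow n (Z * (ptform y1 * ptform y2))),
  6%:R^-1; split; first by rewrite invr_eq0.
by rewrite -(psi_split_spanmx n Z y1 y2 y3 hn hZ psi hpsi) -scaler_nat scalerA mulVf ?scale1r.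
Qed.
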